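(* The category $\mathbf{Top_S}$ of topological spaces and sober maps is equivalent to the opposite of the category $\mathbf{SMT_P}$ of spatial MT-algebras and proximity morphisms. The equivalence sends a space $X$ to $\mathcal P X$, a sober map $f:X\rightsquigarrow Y$ to the proximity morphism $\mathcal P Y\to\mathcal P X$ determined by $U\mapsto\{x\in X: U\in f(x)\}$ on open sets $U$ of $Y$, a spatial MT-algebra $M$ to $\mathrm{at}\,M$, and a proximity morphism $g:M\to N$ to the sober map $\mathrm{at}\,N\rightsquigarrow\mathrm{at}\,M$, $y\mapsto\{\eta_M(a): a\in\mathcal O M,\ y\le g(a)\}$.
   Context: For a space $X$, $\Omega X$ is its frame of opens, $\mathrm{pt}\,L$ the space of completely prime filters of a frame $L$ (opens $\{P: a\in P\}$), and $s X=\mathrm{pt}\,\Omega X$ the soberification with $\lambda_X:X\to sX$, $\lambda_X(x)=\{U\in\Omega X: x\in U\}$; $s$ is a functor, and $\lambda_{sZ}$ is a homeomorphism. A sober map $f:X\rightsquigarrow Y$ is a continuous map $f:X\to sY$. The composite of $f:X\rightsquigarrow Y$ and $g:Y\rightsquigarrow Z$ is $g\bullet f=\lambda_{sZ}^{-1}\circ sg\circ f$, and the identity on $X$ is $\lambda_X$; this defines $\mathbf{Top_S}$. An MT-algebra is a complete boolean algebra $M$ with $\square$ satisfying $\square1=1$, $\square(a\wedge b)=\square a\wedge\square b$, $\square a\le a$, $\square a\le\square\square a$; $\Diamond=\neg\square\neg$; open: $\square a=a$; locally closed: $a=\square b\wedge\Diamond c$; $\mathcal OM$, $\mathcal{LC}M$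 as usual. $\mathcal PX$ is the powerset of $X$ with topological interior. $\mathrm{at}\,M$ is the set of atoms with topology $\{\eta_M(u):u\in\mathcal OM\}$, $\eta_M(a)=\{x\in\mathrm{at}\,M:x\le a\}$; $M$ is spatial if $\eta_M$ is injective. A proximity morphism $f:M\to N$ is a map with (P1) $f|_{\mathcal O M}:\mathcal O M\to\mathcal O N$ a frame morphism; (P2) $f(a\wedge b)=f(a)\wedge f(b)$; (P3) $f(\bigvee S)=\bigvee f[S]$ for finite $S\subseteq\mathcal{LC}M$; (P4) $f(a)=\bigvee\{f(x):x\in\mathcal{LC}M,x\le a\}$. Proximity morphisms compose by $(g\star f)(a)=\bigvee\{g(f(x)):x\in\mathcal{LC}M_1,x\le a\}$ with identities $1_M(a)=\bigvee\{x\in\mathcal{LC}M:x\le a\}$; a proximity morphism is determined by its values on open elements. *)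

From Stdlib Require Import List.

Record RawSpace := { pts : Type; isOpen : (pts -> Prop) -> Prop }.
Arguments isOpen : clear implicits.

Definition is_topology (X : RawSpace) : Prop :=
  isOpen X (fun _ => True) /\
  (forall U V, isOpen X U -> isOpen X V -> isOpen X (fun x => U x /\ V x)) /\
  (forall F : (pts X -> Prop) -> Prop,
     (forall U, F U -> isOpen X U) -> isOpen X (fun x => exists U, F U /\ U x)).

(* completely prime filters of the frame Omega X (top = whole set,
   meets = intersections, joins = unions) *)
Definition cpf (X : RawSpace) (P : (pts X -> Prop) -> Prop) : Prop :=
  (forall U, P U -> isOpen X U) /\
  P (fun _ => True) /\
  (forall U V, isOpen X V -> P U -> (forall x, U x -> V x) -> P V) /\
  (forall U V, P U -> P V -> P (fun x => U x /\ V x)) /\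
  (forall F : (pts X -> Prop) -> Prop, (forall U, F U -> isOpen X U) ->
     P (fun x => exists U, F U /\ U x) -> exists U, F U /\ P U).

(* a sober map X ~> Y : a continuous map X -> sY = pt (Omega Y);
   the opens of sY are {P | U \in P}, U open in Y *)
Definition smap (X Y : RawSpace) := pts X -> (pts Y -> Prop) -> Prop.

Definition sober_map (X Y : RawSpace) (f : smap X Y) : Prop :=
  (forall x, cpf Y (f x)) /\
  (forall U, isOpen Y U -> isOpen X (fun x => f x U)).

Definition sid (X : RawSpace) : smap X X := fun x U => isOpen X U /\ U x.

(* g . f = lambda_{sZ}^{-1} o s g o f, unfolded:
   (g . f)(x) = { W in Omega Z | { y | W in g y } in f x } *)
Definition scomp (X Y Z : RawSpace) (g : smap Y Z) (f : smap X Y) : smap X Z :=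
  fun x W => isOpen Z W /\ f x (fun y => g y W).

Record RawMT := {
  car : Type;
  le : car -> car -> Prop;
  sup : (car -> Prop) -> car;
  cmpl : car -> car;
  box : car -> car }.
Arguments le : clear implicits.
Arguments sup : clear implicits.
Arguments cmpl : clear implicits.
Arguments box : clear implicits.

Definition top (M : RawMT) : car M := sup M (fun _ => True).
Definition bot (M : RawMT) : car M := sup M (fun _ => False).
Definition join (M : RawMT) (a b : car M) : car M := sup M (fun x => x = a \/ x = b).
Definition meet (M : RawMT) (a b : car M) : car M :=
  sup M (fun x => le M x a /\ le M x b).

Definition is_CBA (M : RawMT) : Prop :=
  (forall a, le M a a) /\
  (forall a b c, le M a b -> le M b c -> le M a c) /\
  (forall a b, le M a b -> le M b a -> a = b) /\
  (forall S a, S a -> le M a (sup M S)) /\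
  (forall S b, (forall a, S a -> le M a b) -> le M (sup M S) b) /\
  (forall a b c, meet M a (join M b c) = join M (meet M a b) (meet M a c)) /\
  (forall a, meet M a (cmpl M a) = bot M /\ join M a (cmpl M a) = top M).

Definition is_MT (M : RawMT) : Prop :=
  is_CBA M /\
  box M (top M) = top M /\
  (forall a b, box M (meet M a b) = meet M (box M a) (box M b)) /\
  (forall a, le M (box M a) a) /\
  (forall a, le M (box M a) (box M (box M a))).

Definition diamond (M : RawMT) (a : car M) : car M := cmpl M (box M (cmpl M a)).
Definition is_open (M : RawMT) (a : car M) : Prop := box M a = a.
Definition lc (M : RawMT) (a : car M) : Prop :=
  exists b c, a = meet M (box M b) (diamond M c).

Definition PX (X : RawSpace) : RawMT := {|
  car := pts X -> Prop;
  le := fun A B => forall x, A x -> B x;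
  sup := fun S x => exists A, S A /\ A x;
  cmpl := fun A x => ~ A x;
  box := fun A x => exists U, isOpen X U /\ (forall y, U y -> A y) /\ U x |}.

Definition atom (M : RawMT) (x : car M) : Prop :=
  x <> bot M /\ forall y, le M y x -> y = bot M \/ y = x.

Definition atoms (M : RawMT) := {x : car M | atom M x}.

Definition eta (M : RawMT) (a : car M) : atoms M -> Prop :=
  fun x => le M (proj1_sig x) a.

Definition atM (M : RawMT) : RawSpace := {|
  pts := atoms M;
  isOpen := fun V => exists u, is_open M u /\ V = eta M u |}.

Definition spatial (M : RawMT) : Prop := forall a b, eta M a = eta M b -> a = b.

Definition proximity (M N : RawMT) (f : car M -> car N) : Prop :=
  (* (P1) f restricted to O M is a frame morphism O M -> O N *)
  (forall u, is_open M u -> is_open N (f u)) /\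
  f (top M) = top N /\
  (forall u v, is_open M u -> is_open M v -> f (meet M u v) = meet N (f u) (f v)) /\
  (forall S, (forall u, S u -> is_open M u) ->
     f (sup M S) = sup N (fun y => exists u, S u /\ y = f u)) /\
  (* (P2) *)
  (forall a b, f (meet M a b) = meet N (f a) (f b)) /\
  (* (P3) finite joins of locally closed elements *)
  (forall l : list (car M), (forall x, In x l -> lc M x) ->
     f (sup M (fun x => In x l)) = sup N (fun y => exists x, In x l /\ y = f x)) /\
  (* (P4) *)
  (forall a, f a = sup N (fun y => exists x, lc M x /\ le M x a /\ y = f x)).

Definition pcomp (M1 M2 M3 : RawMT) (g : car M2 -> car M3) (f : car M1 -> car M2)
  : car M1 -> car M3 :=
  fun a => sup M3 (fun y => exists x, lc M1 x /\ le M1 x a /\ y = g (f x)).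

Definition pid (M : RawMT) : car M -> car M :=
  fun a => sup M (fun x => lc M x /\ le M x a).

Definition Gmor (M N : RawMT) (g : car M -> car N) : smap (atM N) (atM M) :=
  fun y V => exists a, is_open M a /\ V = eta M a /\ le N (proj1_sig y) (g a).

(* In a spatial MT-algebra [M] the map [eta] identifies [M] with a field of
   sets of atoms, and atoms are completely join-prime and decide complements,
   so every lattice identity can be checked atom by atom.  A proximity morphism
   is determined by its values on the locally closed elements [u /\ ~v], where
   (P2) and (P3) force [g (u /\ ~v) = g u /\ ~ g v].  Dually, a sober map [f]
   induces [U \ V |-> {x | U in f x, V notin f x}], and the complete primeness
   of the filters [f x] gives (P3) by induction on the list of locally closed
   sets.  The unit [X ~ at (P X)] sends [x] to the atom [{x}], and the counit
   [M ~ P (at M)] is [eta] composed with the identity proximity morphism, which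
   fixes locally closed elements. *)

From Stdlib Require Import List Classical.
From Stdlib Require Import FunctionalExtensionality PropExtensionality ProofIrrelevance.

Lemma pred_ext {T : Type} (A B : T -> Prop) : (forall x, A x <-> B x) -> A = B.
Proof. intros h; extensionality x; apply propositional_extensionality, h. Qed.

Section CompleteBooleanAlgebra.
Context {M : RawMT} (C : is_CBA M).

Lemma le_refl a : le M a a.
Proof. apply C. Qed.
Lemma le_trans a b c : le M a b -> le M b c -> le M a c.
Proof. apply C. Qed.
Lemma le_antisym a b : le M a b -> le M b a -> a = b.
Proof. apply C. Qed.
Lemma le_sup (S : car M -> Prop) a : S a -> le M a (sup M S).
Proof. apply C. Qed.
Lemma sup_le (S : car M -> Prop) b : (forall a, S a -> le M a b) -> le M (sup M S) b.
Proof. apply C. Qed.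
Lemma meet_join_distr a b c : meet M a (join M b c) = join M (meet M a b) (meet M a c).
Proof. apply C. Qed.
Lemma meet_cmpl a : meet M a (cmpl M a) = bot M.
Proof. apply C. Qed.
Lemma join_cmpl a : join M a (cmpl M a) = top M.
Proof. apply C. Qed.

Lemma meet_le_l a b : le M (meet M a b) a.
Proof. apply sup_le; intros x [h _]; exact h. Qed.
Lemma meet_le_r a b : le M (meet M a b) b.
Proof. apply sup_le; intros x [_ h]; exact h. Qed.
Lemma le_meet a b c : le M c a -> le M c b -> le M c (meet M a b).
Proof. intros h1 h2; apply le_sup; split; assumption. Qed.
Lemma le_meet_iff a b c : le M c (meet M a b) <-> le M c a /\ le M c b.
Proof.
  split.
  - intros h; split; eapply le_trans; eauto using meet_le_l, meet_le_r.
  - intros [h1 h2]; apply le_meet; assumption.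
Qed.
Lemma le_join_l a b : le M a (join M a b).
Proof. apply le_sup; left; reflexivity. Qed.
Lemma le_join_r a b : le M b (join M a b).
Proof. apply le_sup; right; reflexivity. Qed.
Lemma join_le a b c : le M a c -> le M b c -> le M (join M a b) c.
Proof. intros h1 h2; apply sup_le; intros x [-> | ->]; assumption. Qed.
Lemma le_top a : le M a (top M).
Proof. apply le_sup; exact I. Qed.
Lemma bot_le a : le M (bot M) a.
Proof. apply sup_le; intros x []. Qed.

Lemma meet_comm a b : meet M a b = meet M b a.
Proof. apply le_antisym; apply le_meet; auto using meet_le_l, meet_le_r. Qed.
Lemma meet_of_le a b : le M a b -> meet M a b = a.
Proof. intros h; apply le_antisym; auto using meet_le_l, le_meet, le_refl. Qed.

Lemma disjoint_le_cmpl a b : meet M a b = bot M -> le M b (cmpl M a).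
Proof.
  intros e.
  assert (hb : b = meet M b (join M a (cmpl M a))).
  { rewrite join_cmpl; symmetry; apply meet_of_le, le_top. }
  rewrite hb, meet_join_distr, (meet_comm b a), e.
  apply join_le; [apply bot_le | apply meet_le_r].
Qed.

Lemma atom_not_le_bot y : atom M y -> ~ le M y (bot M).
Proof. intros [hy _] h; apply hy, le_antisym; [exact h | apply bot_le]. Qed.

Lemma atom_meet_bot y a : atom M y -> ~ le M y a -> meet M y a = bot M.
Proof.
  intros [_ hy] hn; destruct (hy (meet M y a) (meet_le_l y a)) as [e | e]; [exact e |].
  exfalso; apply hn; rewrite <- e; apply meet_le_r.
Qed.

Lemma atom_le_cmpl y a : atom M y -> le M y (cmpl M a) <-> ~ le M y a.
Proof.
  intros hy; split.
  - intros h1 h2; apply (atom_not_le_bot y hy); rewrite <- (meet_cmpl a).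
    apply le_meet; assumption.
  - intros hn; apply disjoint_le_cmpl; rewrite meet_comm; apply atom_meet_bot; assumption.
Qed.

Lemma atom_le_sup y (S : car M -> Prop) : atom M y -> le M y (sup M S) -> exists s, S s /\ le M y s.
Proof.
  intros hy h; apply NNPP; intros hn.
  assert (hS : le M (sup M S) (cmpl M y)).
  { apply sup_le; intros s hs; apply disjoint_le_cmpl, atom_meet_bot; [exact hy |].
    intros hys; apply hn; exists s; split; assumption. }
  apply (proj1 (atom_le_cmpl y y hy) (le_trans _ _ _ h hS)), le_refl.
Qed.

Lemma atom_le_join y a b : atom M y -> le M y (join M a b) <-> le M y a \/ le M y b.
Proof.
  intros hy; split.
  - intros h; destruct (atom_le_sup y _ hy h) as [s [[-> | ->] hs]]; auto.
  - intros [h | h]; eapply le_trans; eauto using le_join_l, le_join_r.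
Qed.

Lemma atom_le_atom y x : atom M y -> atom M x -> le M y x -> y = x.
Proof.
  intros [hy _] [_ hx] h; destruct (hx y h) as [e | e]; [contradiction | exact e].
Qed.

Lemma eta_top : eta M (top M) = fun _ => True.
Proof. apply pred_ext; intros y; split; [trivial | intros _; apply le_top]. Qed.

Lemma eta_meet a b : eta M (meet M a b) = fun y => eta M a y /\ eta M b y.
Proof. apply pred_ext; intros y; apply le_meet_iff. Qed.

Lemma eta_sup (S : car M -> Prop) : eta M (sup M S) = fun y => exists s, S s /\ eta M s y.
Proof.
  apply pred_ext; intros [y hy]; unfold eta; simpl; split.
  - apply atom_le_sup, hy.
  - intros [s [hs h]]; eapply le_trans; [exact h | apply le_sup, hs].
Qed.

Lemma eta_cmpl a : eta M (cmpl M a) = fun y => ~ eta M a y.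
Proof. apply pred_ext; intros [y hy]; apply atom_le_cmpl, hy. Qed.

Hypothesis Hs : spatial M.

Lemma le_of_atoms a b : (forall y, atom M y -> le M y a -> le M y b) -> le M a b.
Proof.
  intros h; assert (e : meet M a b = a).
  { apply Hs, pred_ext; intros [y hy]; unfold eta; simpl; rewrite le_meet_iff.
    split; [tauto | auto]. }
  rewrite <- e; apply meet_le_r.
Qed.

Lemma eq_of_atoms a b : (forall y, atom M y -> le M y a <-> le M y b) -> a = b.
Proof. intros h; apply le_antisym; apply le_of_atoms; intros y hy; apply h, hy. Qed.

Lemma le_iff_eta a b : le M a b <-> (forall y, eta M a y -> eta M b y).
Proof.
  split.
  - intros h [y hy]; unfold eta; simpl; intros h'; eapply le_trans; eauto.
  - intros h; apply le_of_atoms; intros y hy; exact (h (exist _ y hy)).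
Qed.

End CompleteBooleanAlgebra.

Section MTAlgebra.
Context {M : RawMT} (HM : is_MT M).
Let C : is_CBA M := proj1 HM.

Lemma box_top : box M (top M) = top M.
Proof. apply HM. Qed.
Lemma box_meet a b : box M (meet M a b) = meet M (box M a) (box M b).
Proof. apply HM. Qed.
Lemma box_le a : le M (box M a) a.
Proof. apply HM. Qed.
Lemma box_le_box_box a : le M (box M a) (box M (box M a)).
Proof. apply HM. Qed.

Lemma box_mono a b : le M a b -> le M (box M a) (box M b).
Proof. intros h; rewrite <- (meet_of_le C a b h), box_meet; apply meet_le_r, C. Qed.

Lemma open_box a : is_open M (box M a).
Proof. apply (le_antisym C); [apply box_le | apply box_le_box_box]. Qed.

Lemma open_le_box u a : is_open M u -> le M u a -> le M u (box M a).
Proof. intros hu h; rewrite <- hu; apply box_mono, h. Qed.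

Lemma open_top : is_open M (top M).
Proof. apply box_top. Qed.
Lemma open_meet u v : is_open M u -> is_open M v -> is_open M (meet M u v).
Proof. intros hu hv; unfold is_open; rewrite box_meet, hu, hv; reflexivity. Qed.
Lemma open_sup (S : car M -> Prop) : (forall u, S u -> is_open M u) -> is_open M (sup M S).
Proof.
  intros hS; apply (le_antisym C); [apply box_le |].
  apply (sup_le C); intros a ha; apply open_le_box; [apply hS, ha | apply (le_sup C), ha].
Qed.
Lemma open_join u v : is_open M u -> is_open M v -> is_open M (join M u v).
Proof. intros hu hv; apply open_sup; intros w [-> | ->]; assumption. Qed.
Lemma open_bot : is_open M (bot M).
Proof. apply open_sup; intros w []. Qed.

Lemma pid_le a : le M (pid M a) a.
Proof. apply (sup_le C); intros x [_ h]; exact h. Qed.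

Lemma pid_lc x : lc M x -> pid M x = x.
Proof.
  intros hx; apply (le_antisym C); [apply pid_le |].
  apply (le_sup C); split; [exact hx | apply (le_refl C)].
Qed.

Lemma atom_le_pid y a : atom M y ->
  le M y (pid M a) <-> exists x, lc M x /\ le M x a /\ le M y x.
Proof.
  intros hy; split.
  - intros h; destruct (atom_le_sup C y _ hy h) as [x [[h1 h2] h3]]; eauto.
  - intros [x [h1 [h2 h3]]]; eapply (le_trans C); [exact h3 | apply (le_sup C); auto].
Qed.

Lemma union_eta (F : (atoms M -> Prop) -> Prop) : (forall U, F U -> isOpen (atM M) U) ->
  (fun y => exists U, F U /\ U y) = eta M (sup M (fun w => is_open M w /\ F (eta M w))).
Proof.
  intros hF; rewrite (eta_sup C); apply pred_ext; intros y; split.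
  - intros [U [hU hy]]; destruct (hF U hU) as [u [hu ->]]; exists u; auto.
  - intros [s [[_ h1] h2]]; eauto.
Qed.

Lemma atM_topology : is_topology (atM M).
Proof.
  split; [| split].
  - exists (top M); split; [apply open_top | symmetry; apply (eta_top C)].
  - intros U V [u [hu ->]] [v [hv ->]]; exists (meet M u v).
    split; [apply open_meet; assumption | symmetry; apply (eta_meet C)].
  - intros F hF; simpl; rewrite union_eta by exact hF; eexists; split; [| reflexivity].
    apply open_sup; intros w [h _]; exact h.
Qed.

Hypothesis Hs : spatial M.

Lemma cmpl_cmpl a : cmpl M (cmpl M a) = a.
Proof.
  apply (eq_of_atoms C Hs); intros y hy; rewrite !(atom_le_cmpl C) by exact hy.
  split; [apply NNPP | auto].
Qed.

Lemma cmpl_bot : cmpl M (bot M) = top M.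
Proof.
  apply (eq_of_atoms C Hs); intros y hy; rewrite (atom_le_cmpl C) by exact hy.
  split; intros _; [apply (le_top C) | apply (atom_not_le_bot C), hy].
Qed.

Lemma lc_iff x : lc M x <-> exists u v, is_open M u /\ is_open M v /\ x = meet M u (cmpl M v).
Proof.
  split.
  - intros [b [c ->]]; exists (box M b), (box M (cmpl M c)); auto using open_box.
  - intros [u [v [hu [hv ->]]]]; exists u, (cmpl M v); unfold diamond.
    rewrite cmpl_cmpl, hv, hu; reflexivity.
Qed.

Lemma open_lc u : is_open M u -> lc M u.
Proof.
  intros hu; apply lc_iff; exists u, (bot M); split; [exact hu | split; [apply open_bot |]].
  rewrite cmpl_bot; symmetry; apply (meet_of_le C), (le_top C).
Qed.

Lemma lc_meet x x' : lc M x -> lc M x' -> lc M (meet M x x').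
Proof.
  rewrite !lc_iff; intros [u [v [hu [hv ->]]]] [u' [v' [hu' [hv' ->]]]].
  exists (meet M u u'), (join M v v'); split; [apply open_meet | split; [apply open_join |]]; auto.
  apply (eq_of_atoms C Hs); intros y hy.
  rewrite !(le_meet_iff C), !(atom_le_cmpl C), (atom_le_join C) by exact hy; tauto.
Qed.

Lemma pid_meet a b : pid M (meet M a b) = meet M (pid M a) (pid M b).
Proof.
  apply (eq_of_atoms C Hs); intros y hy; rewrite (le_meet_iff C), !atom_le_pid by exact hy.
  split.
  - intros [x [hx [hxab hyx]]]; rewrite (le_meet_iff C) in hxab; destruct hxab as [hxa hxb].
    split; exists x; auto.
  - intros [[x1 [h1 [h1a h1y]]] [x2 [h2 [h2b h2y]]]]; exists (meet M x1 x2).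
    split; [apply lc_meet; assumption |].
    rewrite !(le_meet_iff C); split; [split |]; auto.
    + apply (le_trans C _ x1); [apply (meet_le_l C) | exact h1a].
    + apply (le_trans C _ x2); [apply (meet_le_r C) | exact h2b].
Qed.

Lemma pid_sup_lc (S : car M -> Prop) : (forall x, S x -> lc M x) -> pid M (sup M S) = sup M S.
Proof.
  intros hS; apply (le_antisym C); [apply pid_le |].
  apply (le_of_atoms C Hs); intros y hy h; destruct (atom_le_sup C y S hy h) as [x [hx hyx]].
  apply atom_le_pid; [exact hy |].
  exists x; split; [auto | split; [apply (le_sup C), hx | exact hyx]].
Qed.

End MTAlgebra.

Section Topology.
Context {X : RawSpace} (HX : is_topology X).

Lemma isOpen_full : isOpen X (fun _ => True).
Proof. apply HX. Qed.
Lemma isOpen_inter U V : isOpen X U -> isOpen X V -> isOpen X (fun x => U x /\ V x).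
Proof. apply HX. Qed.
Lemma isOpen_Union (F : (pts X -> Prop) -> Prop) :
  (forall U, F U -> isOpen X U) -> isOpen X (fun x => exists U, F U /\ U x).
Proof. apply HX. Qed.

Lemma isOpen_union U V : isOpen X U -> isOpen X V -> isOpen X (fun x => U x \/ V x).
Proof.
  intros hU hV.
  replace (fun x => U x \/ V x) with (fun x => exists W, (W = U \/ W = V) /\ W x).
  - apply isOpen_Union; intros W [-> | ->]; assumption.
  - apply pred_ext; intros x; split; [intros [W [[-> | ->] h]]; auto | intros [h | h]; eauto].
Qed.

Lemma isOpen_empty : isOpen X (fun _ => False).
Proof.
  replace (fun _ : pts X => False) with (fun x => exists W : pts X -> Prop, False /\ W x).
  - apply isOpen_Union; intros W [].
  - apply pred_ext; intros x; split; [intros [W [[] _]] | intros []].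
Qed.

Section CompletelyPrimeFilter.
Context {P : (pts X -> Prop) -> Prop} (HP : cpf X P).

Lemma cpf_full : P (fun _ => True).
Proof. apply HP. Qed.
Lemma cpf_up U V : isOpen X V -> P U -> (forall x, U x -> V x) -> P V.
Proof. apply HP. Qed.
Lemma cpf_inter U V : P U -> P V -> P (fun x => U x /\ V x).
Proof. apply HP. Qed.
Lemma cpf_Union (F : (pts X -> Prop) -> Prop) : (forall U, F U -> isOpen X U) ->
  P (fun x => exists U, F U /\ U x) -> exists U, F U /\ P U.
Proof. apply HP. Qed.

Lemma cpf_union U V : isOpen X U -> isOpen X V -> P (fun x => U x \/ V x) -> P U \/ P V.
Proof.
  intros hU hV h; destruct (cpf_Union (fun W => W = U \/ W = V)) as [W [[-> | ->] hW]]; auto.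
  - intros W [-> | ->]; assumption.
  - eapply cpf_up; [| exact h |].
    + apply isOpen_Union; intros W [-> | ->]; assumption.
    + intros x [hx | hx]; eauto.
Qed.

Lemma cpf_not_empty : ~ P (fun _ => False).
Proof.
  intros h; destruct (cpf_Union (fun _ => False)) as [W [[] _]]; [intros W [] |].
  eapply cpf_up; [| exact h | intros _ []]; apply isOpen_Union; intros W [].
Qed.

End CompletelyPrimeFilter.
End Topology.

Section Powerset.
Context (X : RawSpace).

Lemma px_meet (A B : pts X -> Prop) : meet (PX X) A B = fun x => A x /\ B x.
Proof.
  apply pred_ext; intros x; split.
  - intros [D [[h1 h2] h]]; auto.
  - intros h; exists (fun z => A z /\ B z); split; [split; intros z [? ?]; assumption | exact h].
Qed.
Lemma px_join (A B : pts X -> Prop) : join (PX X) A B = fun x => A x \/ B x.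
Proof.
  apply pred_ext; intros x; split.
  - intros [D [[-> | ->] h]]; auto.
  - intros [h | h]; eexists; eauto.
Qed.
Lemma px_top : top (PX X) = fun _ => True.
Proof. apply pred_ext; intros x; split; [trivial | intros _; exists (fun _ => True); auto]. Qed.
Lemma px_bot : bot (PX X) = fun _ => False.
Proof. apply pred_ext; intros x; split; [intros [D [[] _]] | intros []]. Qed.

Lemma px_atom (A : pts X -> Prop) : atom (PX X) A <-> exists x, A = fun z => z = x.
Proof.
  unfold atom; rewrite px_bot; split.
  - intros [hb ha]; destruct (classic (exists x, A x)) as [[x hx] | hn].
    + exists x; destruct (ha (fun z => z = x)) as [e | e]; [intros z ->; exact hx | | auto].
      exfalso; rewrite <- (f_equal (fun D => D x) e); reflexivity.
    + exfalso; apply hb, pred_ext; intros z; split; [intros hz; apply hn; eauto | intros []].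
  - intros [x ->]; split.
    + intros e; rewrite <- (f_equal (fun D => D x) e); reflexivity.
    + intros B hB; destruct (classic (B x)) as [hx | hx].
      * right; apply pred_ext; intros z; split; [apply hB | intros ->; exact hx].
      * left; apply pred_ext; intros z; split; [| intros []].
        intros hz; pose proof (hB z hz) as ->; auto.
Qed.

Definition singleton_atom (x : pts X) : atoms (PX X) :=
  exist _ (fun z => z = x) (proj2 (px_atom _) (ex_intro _ x eq_refl)).

Lemma eta_singleton_atom (A : pts X -> Prop) x : eta (PX X) A (singleton_atom x) <-> A x.
Proof. split; [intros h; apply h; reflexivity | intros h z ->; exact h]. Qed.

Lemma singleton_atom_surj (y : atoms (PX X)) : exists x, y = singleton_atom x.
Proof.
  destruct y as [A hA]; destruct (proj1 (px_atom A) hA) as [x ->].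
  exists x; unfold singleton_atom; f_equal; apply proof_irrelevance.
Qed.

Lemma px_spatial : spatial (PX X).
Proof.
  intros A B e; apply pred_ext; intros x; rewrite <- !eta_singleton_atom, e; reflexivity.
Qed.

Hypothesis HX : is_topology X.

Lemma px_open (A : pts X -> Prop) : is_open (PX X) A <-> isOpen X A.
Proof.
  unfold is_open; simpl; split.
  - intros e; rewrite <- e.
    replace (fun x => exists U, isOpen X U /\ (forall y, U y -> A y) /\ U x)
      with (fun x => exists U, (isOpen X U /\ (forall y, U y -> A y)) /\ U x).
    + apply (isOpen_Union HX); intros U [h _]; exact h.
    + apply pred_ext; intros x; firstorder.
  - intros h; apply pred_ext; intros x; split.
    + intros [U [_ [h1 h2]]]; auto.
    + intros hx; exists A; auto.
Qed.

Lemma px_MT : is_MT (PX X).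
Proof.
  split; [| split; [| split; [| split]]].
  - split; [| split; [| split; [| split; [| split; [| split]]]]].
    + simpl; auto.
    + simpl; auto.
    + intros A B h1 h2; apply pred_ext; split; auto.
    + intros S A h x hx; exists A; auto.
    + intros S B h x [A [hA hx]]; eapply h; eauto.
    + intros A B D; rewrite !px_meet, !px_join; apply pred_ext; tauto.
    + intros A; rewrite px_meet, px_join, px_top, px_bot.
      split; apply pred_ext; simpl; intros x; tauto.
  - rewrite px_top; apply px_open, isOpen_full, HX.
  - intros A B; rewrite !px_meet; simpl; apply pred_ext; intros x; split.
    + intros [U [hU [h1 h2]]]; split; exists U; repeat split; auto; intros y hy; apply h1, hy.
    + intros [[U [hU [h1 h2]]] [V [hV [h3 h4]]]]; exists (fun z => U z /\ V z).
      split; [apply (isOpen_inter HX); assumption | split; [intros y [? ?]; auto | auto]].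
  - intros A x [U [_ [h1 h2]]]; auto.
  - intros A x [U [hU [h1 h2]]]; exists U; split; [exact hU | split; [| exact h2]].
    intros y hy; exists U; auto.
Qed.

Lemma px_lc (L : pts X -> Prop) : lc (PX X) L <->
  exists U V, isOpen X U /\ isOpen X V /\ L = fun x => U x /\ ~ V x.
Proof.
  rewrite (lc_iff px_MT px_spatial).
  split; intros [U [V [h1 [h2 e]]]]; exists U, V.
  - rewrite px_open in h1, h2; rewrite px_meet in e; auto.
  - rewrite !px_open, px_meet; auto.
Qed.

Lemma px_pid (A : pts X -> Prop) : pid (PX X) A =
  fun x => exists U V, isOpen X U /\ isOpen X V /\ (forall z, U z -> ~ V z -> A z) /\ U x /\ ~ V x.
Proof.
  apply pred_ext; intros x; split.
  - intros [L [[hL hLA] hx]]; apply px_lc in hL; destruct hL as [U [V [hU [hV ->]]]].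
    exists U, V; firstorder.
  - intros [U [V [hU [hV [h [hx1 hx2]]]]]]; exists (fun x => U x /\ ~ V x).
    split; [split; [apply px_lc; eauto 6 | intros z [? ?]; auto] | auto].
Qed.

End Powerset.

Section Proximity.
Context {M N : RawMT} {g : car M -> car N} (Hg : proximity M N g).

Lemma prox_open u : is_open M u -> is_open N (g u).
Proof. apply Hg. Qed.
Lemma prox_top : g (top M) = top N.
Proof. apply Hg. Qed.
Lemma prox_meet_open u v : is_open M u -> is_open M v -> g (meet M u v) = meet N (g u) (g v).
Proof. apply Hg. Qed.
Lemma prox_sup_open (S : car M -> Prop) : (forall u, S u -> is_open M u) ->
  g (sup M S) = sup N (fun y => exists u, S u /\ y = g u).
Proof. apply Hg. Qed.
Lemma prox_meet a b : g (meet M a b) = meet N (g a) (g b).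
Proof. apply Hg. Qed.
Lemma prox_join_lc (l : list (car M)) : (forall x, In x l -> lc M x) ->
  g (sup M (fun x => In x l)) = sup N (fun y => exists x, In x l /\ y = g x).
Proof. apply Hg. Qed.

Lemma prox_bot : g (bot M) = bot N.
Proof.
  transitivity (g (sup M (fun x => In x nil))); [reflexivity |].
  rewrite (prox_join_lc nil (fun x h => match h with end)).
  unfold bot; f_equal; apply pred_ext; intros y; split; [intros [x [[] _]] | intros []].
Qed.

Lemma prox_mono (CM : is_CBA M) (CN : is_CBA N) a b : le M a b -> le N (g a) (g b).
Proof. intros h; rewrite <- (meet_of_le CM a b h), prox_meet; apply (meet_le_r CN). Qed.

Hypotheses (HM : is_MT M) (HsM : spatial M) (CN : is_CBA N) (HsN : spatial N).
Let CM : is_CBA M := proj1 HM.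

(* With [x := u /\ ~v], (P2) gives [g x /\ g v = g bot = bot], and (P3) turns
   [u <= x \/ v] into [g u <= g x \/ g v]. *)
Lemma prox_diff_open u v : is_open M u -> is_open M v ->
  g (meet M u (cmpl M v)) = meet N (g u) (cmpl N (g v)).
Proof.
  intros hu hv; set (x := meet M u (cmpl M v)).
  apply (eq_of_atoms CN HsN); intros y hy.
  rewrite (le_meet_iff CN), (atom_le_cmpl CN) by exact hy; split.
  - intros h; split.
    + eapply (le_trans CN); [exact h | apply (prox_mono CM CN), (meet_le_l CM)].
    + intros h2; apply (atom_not_le_bot CN y hy); rewrite <- prox_bot.
      replace (bot M) with (meet M x v).
      * rewrite prox_meet; apply (le_meet CN); assumption.
      * apply (eq_of_atoms CM HsM); intros z hz; unfold x.
        rewrite !(le_meet_iff CM), (atom_le_cmpl CM) by exact hz.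
        split; [tauto | intros h3; exfalso; apply (atom_not_le_bot CM z hz h3)].
  - intros [h1 h2].
    assert (e : le M u (sup M (fun w => In w (x :: v :: nil)))).
    { apply (le_of_atoms CM HsM); intros z hz hzu; destruct (classic (le M z v)) as [hzv | hzv].
      - eapply (le_trans CM); [exact hzv | apply (le_sup CM); simpl; auto].
      - eapply (le_trans CM); [| apply (le_sup CM); simpl; left; reflexivity].
        apply (le_meet CM); [exact hzu | apply (atom_le_cmpl CM); assumption]. }
    apply (prox_mono CM CN) in e; rewrite prox_join_lc in e.
    + destruct (atom_le_sup CN y _ hy (le_trans CN _ _ _ h1 e)) as [z [[w [hw ->]] hz]].
      destruct hw as [<- | [<- | []]]; [exact hz | contradiction].
    + intros w [<- | [<- | []]].
      * apply (lc_iff HM HsM); exists u, v; auto.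
      * apply (open_lc HM HsM), hv.
Qed.

End Proximity.

Lemma Gmor_eta {M N : RawMT} (g : car M -> car N) (HsM : spatial M) u y :
  is_open M u -> Gmor M N g y (eta M u) <-> eta N (g u) y.
Proof.
  intros hu; split.
  - intros [a [ha [e h]]]; apply HsM in e; subst a; exact h.
  - intros h; exists u; auto.
Qed.

Lemma Gmor_preimage_eta {M N : RawMT} (g : car M -> car N) (HsM : spatial M) u :
  is_open M u -> (fun y : pts (atM N) => Gmor M N g y (eta M u)) = eta N (g u).
Proof. intros hu; apply pred_ext; intros y; apply Gmor_eta; assumption. Qed.

Lemma Gmor_sober {M N : RawMT} (g : car M -> car N) :
  is_MT M -> spatial M -> is_CBA N -> proximity M N g -> sober_map (atM N) (atM M) (Gmor M N g).
Proof.
  intros HM HsM CN Hg; pose proof (proj1 HM) as CM; split.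
  - intros y; split; [| split; [| split; [| split]]].
    + intros U [a [ha [-> _]]]; exists a; auto.
    + exists (top M); split; [apply (open_top HM) | split; [rewrite (eta_top CM); reflexivity |]].
      rewrite (prox_top Hg); apply (le_top CN).
    + intros U V [v [hv ->]] [a [ha [-> h]]] hUV.
      exists v; split; [exact hv | split; [reflexivity |]].
      eapply (le_trans CN); [exact h | apply (prox_mono Hg CM CN), (le_iff_eta CM HsM), hUV].
    + intros U V [a [ha [-> h1]]] [b [hb [-> h2]]]; exists (meet M a b).
      split; [apply (open_meet HM); assumption | split; [rewrite (eta_meet CM); reflexivity |]].
      rewrite (prox_meet_open Hg) by assumption; apply (le_meet CN); assumption.
    + intros F hF [a [ha [e h]]]; simpl in e; rewrite (union_eta HM F hF) in e.
      apply HsM in e; subst a.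
      rewrite (prox_sup_open Hg) in h by (intros w [hw _]; exact hw).
      destruct y as [y hy]; simpl in h.
      destruct (atom_le_sup CN y _ hy h) as [z [[w [[hw hFw] ->]] hz]].
      exists (eta M w); split; [exact hFw | exists w; auto].
  - intros U [u [hu ->]]; exists (g u); split; [apply (prox_open Hg), hu |].
    apply (Gmor_preimage_eta g HsM u hu).
Qed.

Lemma Gmor_pid (M : RawMT) : is_MT M -> spatial M -> Gmor M M (pid M) = sid (atM M).
Proof.
  intros HM HsM; extensionality y; apply pred_ext; intros V; split.
  - intros [a [ha [-> h]]]; rewrite (pid_lc HM) in h by apply (open_lc HM HsM), ha.
    split; [exists a; auto | exact h].
  - intros [[a [ha ->]] h]; exists a; split; [exact ha | split; [reflexivity |]].
    rewrite (pid_lc HM); [exact h | apply (open_lc HM HsM), ha].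
Qed.

Lemma pcomp_open {M1 M2 M3 : RawMT} {f : car M1 -> car M2} {g : car M2 -> car M3} :
  is_MT M1 -> spatial M1 -> is_CBA M2 -> is_CBA M3 -> proximity M1 M2 f -> proximity M2 M3 g ->
  forall a, is_open M1 a -> pcomp M1 M2 M3 g f a = g (f a).
Proof.
  intros H1 Hs1 C2 C3 Hf Hg a ha; pose proof (proj1 H1) as C1; apply (le_antisym C3).
  - apply (sup_le C3); intros y [x [hx [hxa ->]]].
    apply (prox_mono Hg C2 C3), (prox_mono Hf C1 C2), hxa.
  - apply (le_sup C3); exists a.
    split; [apply (open_lc H1 Hs1), ha | split; [apply (le_refl C1) | reflexivity]].
Qed.

Lemma Gmor_pcomp {M1 M2 M3 : RawMT} (f : car M1 -> car M2) (g : car M2 -> car M3) :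
  is_MT M1 -> spatial M1 -> is_CBA M2 -> spatial M2 -> is_CBA M3 ->
  proximity M1 M2 f -> proximity M2 M3 g ->
  Gmor M1 M3 (pcomp M1 M2 M3 g f) = scomp (atM M3) (atM M2) (atM M1) (Gmor M1 M2 f) (Gmor M2 M3 g).
Proof.
  intros H1 Hs1 C2 Hs2 C3 Hf Hg; extensionality y; apply pred_ext; intros W; split.
  - intros [a [ha [-> h]]]; rewrite (pcomp_open H1 Hs1 C2 C3 Hf Hg a ha) in h.
    split; [exists a; auto |].
    rewrite (Gmor_preimage_eta f Hs1 a ha); apply (Gmor_eta g Hs2 _ y (prox_open Hf a ha)), h.
  - intros [[a [ha ->]] h]; exists a; split; [exact ha | split; [reflexivity |]].
    rewrite (Gmor_preimage_eta f Hs1 a ha) in h.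
    rewrite (pcomp_open H1 Hs1 C2 C3 Hf Hg a ha).
    apply (Gmor_eta g Hs2 _ y (prox_open Hf a ha)), h.
Qed.

(* The functor P on sober maps: on opens [Pmor f U = {x | U in f x}], and (P4)
   extends it as the union of its values [{x | U in f x, V notin f x}] on the
   locally closed sets [U \ V] contained in the argument. *)
Definition Pmor (X Y : RawSpace) (f : smap X Y) (A : pts Y -> Prop) : pts X -> Prop :=
  fun x => exists U V, isOpen Y U /\ isOpen Y V /\ (forall z, U z -> ~ V z -> A z) /\
    f x U /\ ~ f x V.

Lemma Pmor_mono {X Y : RawSpace} (f : smap X Y) (A B : pts Y -> Prop) :
  (forall z, A z -> B z) -> forall x, Pmor X Y f A x -> Pmor X Y f B x.
Proof. intros h x [U [V [h1 [h2 [h3 h4]]]]]; exists U, V; repeat split; auto; tauto. Qed.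

Section SoberMapPowerset.
Context {X Y : RawSpace} (HY : is_topology Y) {f : smap X Y} (Hf : sober_map X Y f).

Lemma Pmor_diff U V : isOpen Y U -> isOpen Y V ->
  Pmor X Y f (fun z => U z /\ ~ V z) = fun x => f x U /\ ~ f x V.
Proof.
  intros hU hV; apply pred_ext; intros x; pose proof (proj1 Hf x) as P; split.
  - intros [U' [V' [hU' [hV' [hsub [h1 h2]]]]]]; split.
    + assert (h3 : f x (fun z => U z \/ V' z)).
      { eapply (cpf_up P); [apply (isOpen_union HY); assumption | exact h1 |].
        intros z hz; destruct (classic (V' z)) as [hv | hv]; [right; exact hv |].
        left; apply (hsub z hz hv). }
      destruct (cpf_union HY P U V' hU hV' h3); tauto.
    + intros hv; apply h2; apply (cpf_up P (fun z => U' z /\ V z)).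
      * exact hV'.
      * apply (cpf_inter P); assumption.
      * intros z [hz1 hz2]; apply NNPP; intro hn; apply (hsub z hz1 hn); exact hz2.
  - intros [h1 h2]; exists U, V; auto.
Qed.

Lemma Pmor_open U : isOpen Y U -> Pmor X Y f U = fun x => f x U.
Proof.
  intros hU.
  replace U with (fun z => U z /\ ~ (fun _ : pts Y => False) z) at 1
    by (apply pred_ext; intros z; tauto).
  rewrite (Pmor_diff U _ hU (isOpen_empty HY)); apply pred_ext; intros x.
  pose proof (cpf_not_empty HY (proj1 Hf x)); tauto.
Qed.

(* The induction generalizes the covered set [U \ V] to any pair of opens with
   [U] in and [V] not in the filter [f x]. *)
Lemma Pmor_lc_cover x (l : list (pts Y -> Prop)) : (forall L, In L l -> lc (PX Y) L) ->
  forall U V, isOpen Y U -> isOpen Y V -> f x U -> ~ f x V ->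
  (forall z, U z -> ~ V z -> exists L, In L l /\ L z) ->
  exists L, In L l /\ Pmor X Y f L x.
Proof.
  pose proof (proj1 Hf x) as P.
  induction l as [| L l IH]; intros hl U V hU hV h1 h2 hc.
  - exfalso; apply h2; eapply (cpf_up P); [exact hV | exact h1 |].
    intros z hz; apply NNPP; intros hn; destruct (hc z hz hn) as [L [[] _]].
  - destruct (proj1 (px_lc Y HY L) (hl L (or_introl eq_refl))) as [Ui [Vi [hUi [hVi ->]]]].
    assert (hl' : forall L, In L l -> lc (PX Y) L) by (intros; apply hl; right; assumption).
    destruct (classic (f x Ui /\ ~ f x Vi)) as [hi | hi].
    { exists (fun z => Ui z /\ ~ Vi z).
      split; [left; reflexivity | rewrite Pmor_diff; assumption]. }
    destruct (classic (f x Ui)) as [hui | hui].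
    + assert (hvi : f x Vi) by tauto.
      assert (hc' : forall z, U z /\ Vi z -> ~ V z -> exists L', In L' l /\ L' z).
      { intros z [hz1 hz2] hz3; destruct (hc z hz1 hz3) as [L' [[<- | hL'] hz]]; [tauto | eauto]. }
      destruct (IH hl' _ V (isOpen_inter HY _ _ hU hVi) hV (cpf_inter P _ _ h1 hvi) h2 hc')
        as [L' [hL' hx]].
      exists L'; split; [right |]; assumption.
    + assert (hVUi : ~ f x (fun z => V z \/ Ui z)).
      { intros h; destruct (cpf_union HY P V Ui hV hUi h); tauto. }
      assert (hc' : forall z, U z -> ~ (V z \/ Ui z) -> exists L', In L' l /\ L' z).
      { intros z hz1 hz3; destruct (hc z hz1 (fun h => hz3 (or_introl h))) as [L' [[<- | hL'] hz]];
          [exfalso; apply hz3; right; tauto | eauto]. }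
      destruct (IH hl' U _ hU (isOpen_union HY _ _ hV hUi) h1 hVUi hc') as [L' [hL' hx]].
      exists L'; split; [right |]; assumption.
Qed.

Lemma Pmor_meet A B : Pmor X Y f (meet (PX Y) A B) = meet (PX X) (Pmor X Y f A) (Pmor X Y f B).
Proof.
  pose proof (proj1 Hf) as P; rewrite !px_meet; apply pred_ext; intros x; split.
  - intros h; split; (eapply Pmor_mono; [| exact h]); intros z [? ?]; assumption.
  - intros [[U1 [V1 [hU1 [hV1 [s1 [a1 b1]]]]]] [U2 [V2 [hU2 [hV2 [s2 [a2 b2]]]]]]].
    exists (fun z => U1 z /\ U2 z), (fun z => V1 z \/ V2 z).
    split; [apply (isOpen_inter HY); assumption | split; [apply (isOpen_union HY); assumption |]].
    split; [intros z [? ?] hz; split; auto | split; [apply (cpf_inter (P x)); assumption |]].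
    intros h; destruct (cpf_union HY (P x) V1 V2 hV1 hV2 h); tauto.
Qed.

Lemma Pmor_sup_open (S : (pts Y -> Prop) -> Prop) : (forall U, S U -> isOpen Y U) ->
  Pmor X Y f (sup (PX Y) S) = sup (PX X) (fun B => exists U, S U /\ B = Pmor X Y f U).
Proof.
  intros hS; pose proof (proj1 Hf) as P.
  simpl; rewrite Pmor_open by (apply (isOpen_Union HY), hS).
  apply pred_ext; intros x; split.
  - intros h; destruct (cpf_Union (P x) S hS h) as [U [hU hx]].
    exists (Pmor X Y f U); split; [exists U; auto | rewrite Pmor_open; auto].
  - intros [B [[U [hU ->]] hx]]; rewrite Pmor_open in hx by apply hS, hU.
    apply (cpf_up (P x) U); [apply (isOpen_Union HY), hS | exact hx | intros z hz; eauto].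
Qed.

Lemma Pmor_join_lc (l : list (pts Y -> Prop)) : (forall L, In L l -> lc (PX Y) L) ->
  Pmor X Y f (sup (PX Y) (fun L => In L l))
  = sup (PX X) (fun B => exists L, In L l /\ B = Pmor X Y f L).
Proof.
  intros hl; simpl; apply pred_ext; intros x; split.
  - intros [U [V [hU [hV [hs [h1 h2]]]]]].
    destruct (Pmor_lc_cover x l hl U V hU hV h1 h2) as [L [hL hx]].
    + intros z hz1 hz2; destruct (hs z hz1 hz2) as [L [? ?]]; eauto.
    + exists (Pmor X Y f L); split; eauto.
  - intros [B [[L [hL ->]] hx]]; eapply Pmor_mono; [| exact hx]; intros z hz; eauto.
Qed.

Lemma Pmor_sup_lc (A : pts Y -> Prop) : Pmor X Y f A
  = sup (PX X) (fun B => exists L, lc (PX Y) L /\ le (PX Y) L A /\ B = Pmor X Y f L).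
Proof.
  simpl; apply pred_ext; intros x; split.
  - intros [U [V [hU [hV [hs [h1 h2]]]]]]; exists (Pmor X Y f (fun z => U z /\ ~ V z)).
    split; [exists (fun z => U z /\ ~ V z) |].
    + split; [apply (px_lc Y HY); eauto 6 | split; [intros z [? ?]; auto | reflexivity]].
    + exists U, V; repeat split; auto.
  - intros [B [[L [hL [hLa ->]]] hx]]; eapply Pmor_mono; [exact hLa | exact hx].
Qed.

Lemma Pmor_proximity : is_topology X -> proximity (PX Y) (PX X) (Pmor X Y f).
Proof.
  intros HX; split; [| split; [| split; [| split; [| split; [| split]]]]].
  - intros u hu; apply (px_open Y HY) in hu; apply (px_open X HX).
    rewrite Pmor_open by exact hu; apply Hf, hu.
  - rewrite !px_top, Pmor_open by apply (isOpen_full HY).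
    apply pred_ext; intros x; split; [trivial | intros _; apply (cpf_full (proj1 Hf x))].
  - intros u v _ _; apply Pmor_meet.
  - intros S hS; apply Pmor_sup_open; intros U hU; apply (px_open Y HY), hS, hU.
  - exact Pmor_meet.
  - exact Pmor_join_lc.
  - exact Pmor_sup_lc.
Qed.

End SoberMapPowerset.

Lemma Pmor_sid (X : RawSpace) : is_topology X -> Pmor X X (sid X) = pid (PX X).
Proof.
  intros HX; extensionality A; rewrite (px_pid X HX); apply pred_ext; intros x; split.
  - intros [U [V [hU [hV [hs [[_ h1] h2]]]]]].
    exists U, V; repeat split; auto; intros hv; apply h2; split; assumption.
  - intros [U [V [hU [hV [hs [h1 h2]]]]]].
    exists U, V; repeat split; auto; intros [_ hv]; contradiction.
Qed.

Lemma Pmor_scomp {X Y Z : RawSpace} (f : smap X Y) (g : smap Y Z) :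
  is_topology Y -> is_topology Z -> sober_map X Y f -> sober_map Y Z g ->
  Pmor X Z (scomp X Y Z g f) = pcomp (PX Z) (PX Y) (PX X) (Pmor X Y f) (Pmor Y Z g).
Proof.
  intros HY HZ Hf Hg; extensionality A; apply pred_ext; intros x; split.
  - intros [U [V [hU [hV [hs [[_ h1] h2]]]]]].
    exists (Pmor X Y f (Pmor Y Z g (fun z => U z /\ ~ V z))); split.
    + exists (fun z => U z /\ ~ V z); split; [apply (px_lc Z HZ); eauto 7 |].
      split; [intros z [? ?]; auto | reflexivity].
    + rewrite (Pmor_diff HZ Hg U V hU hV), (Pmor_diff HY Hf); [| apply Hg; assumption ..].
      split; [exact h1 | intros h; apply h2; split; assumption].
  - intros [B [[L [hL [hLA ->]]] hx]].
    apply (px_lc Z HZ) in hL; destruct hL as [U [V [hU [hV ->]]]].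
    rewrite (Pmor_diff HZ Hg U V hU hV), (Pmor_diff HY Hf) in hx by (apply Hg; assumption).
    destruct hx as [h1 h2]; exists U, V; repeat split; auto; intros [_ h]; auto.
Qed.

Definition unit_map (X : RawSpace) : smap X (atM (PX X)) :=
  fun x V => isOpen (atM (PX X)) V /\ V (singleton_atom X x).
Definition unit_inv (X : RawSpace) : smap (atM (PX X)) X :=
  fun a U => isOpen X U /\ eta (PX X) U a.

Section Unit.
Context {X : RawSpace} (HX : is_topology X).

Lemma atPX_open V : isOpen (atM (PX X)) V <-> exists U, isOpen X U /\ V = eta (PX X) U.
Proof. simpl; split; intros [U [h e]]; exists U; split; auto; apply (px_open X HX); assumption. Qed.

Lemma unit_map_eta U x : isOpen X U -> unit_map X x (eta (PX X) U) <-> U x.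
Proof.
  intros hU; unfold unit_map; rewrite eta_singleton_atom.
  split; [tauto |]; intros h; split; [apply atPX_open; eauto | exact h].
Qed.

Lemma unit_map_preimage U : isOpen X U -> (fun x => unit_map X x (eta (PX X) U)) = U.
Proof. intros hU; apply pred_ext; intros x; apply unit_map_eta, hU. Qed.

Lemma unit_inv_preimage U :
  isOpen X U -> (fun a : pts (atM (PX X)) => unit_inv X a U) = eta (PX X) U.
Proof. intros hU; apply pred_ext; intros a; unfold unit_inv; tauto. Qed.

Lemma unit_inv_singleton x U : unit_inv X (singleton_atom X x) U <-> isOpen X U /\ U x.
Proof. unfold unit_inv; rewrite eta_singleton_atom; reflexivity. Qed.

Lemma unit_map_sober : sober_map X (atM (PX X)) (unit_map X).
Proof.
  pose proof (atM_topology (px_MT X HX)) as T; split.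
  - intros x; split; [| split; [| split; [| split]]].
    + intros U [h _]; exact h.
    + split; [apply (isOpen_full T) | exact I].
    + intros U V hV [_ h] hUV; split; auto.
    + intros U V [hU h1] [hV h2]; split; [apply (isOpen_inter T) |]; auto.
    + intros F hF [_ [U [hU hx]]]; exists U; split; [| split]; auto.
  - intros V hV; destruct (proj1 (atPX_open V) hV) as [U [hU ->]].
    rewrite unit_map_preimage; exact hU.
Qed.

Lemma unit_inv_sober : sober_map (atM (PX X)) X (unit_inv X).
Proof.
  split.
  - intros a; destruct (singleton_atom_surj X a) as [x ->].
    split; [| split; [| split; [| split]]].
    + intros U h; apply unit_inv_singleton in h; tauto.
    + apply unit_inv_singleton; split; [apply (isOpen_full HX) | exact I].
    + intros U V hV h hUV; rewrite unit_inv_singleton in *; split; [| apply hUV]; tauto.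
    + intros U V; rewrite !unit_inv_singleton; intros h1 h2.
      split; [apply (isOpen_inter HX) |]; tauto.
    + intros F hF h; apply unit_inv_singleton in h; destruct h as [_ [U [hU hx]]].
      exists U; rewrite unit_inv_singleton; auto.
  - intros U hU; rewrite unit_inv_preimage by exact hU; apply atPX_open; eauto.
Qed.

Lemma unit_inv_map : scomp X (atM (PX X)) X (unit_inv X) (unit_map X) = sid X.
Proof.
  extensionality x; apply pred_ext; intros W; unfold scomp, sid.
  split; intros [hW h]; split; try exact hW.
  - rewrite unit_inv_preimage in h by exact hW; exact (proj1 (unit_map_eta W x hW) h).
  - rewrite unit_inv_preimage by exact hW; exact (proj2 (unit_map_eta W x hW) h).
Qed.

Lemma unit_map_inv :
  scomp (atM (PX X)) X (atM (PX X)) (unit_map X) (unit_inv X) = sid (atM (PX X)).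
Proof.
  extensionality a; apply pred_ext; intros V; unfold scomp, sid; split; intros [hV h];
    destruct (proj1 (atPX_open V) hV) as [U [hU ->]];
    rewrite unit_map_preimage in * by exact hU; unfold unit_inv in *; tauto.
Qed.

End Unit.

Lemma unit_natural {X Y : RawSpace} (f : smap X Y) :
  is_topology X -> is_topology Y -> sober_map X Y f ->
  scomp X (atM (PX X)) (atM (PX Y)) (Gmor (PX Y) (PX X) (Pmor X Y f)) (unit_map X)
  = scomp X Y (atM (PX Y)) (unit_map Y) f.
Proof.
  intros HX HY Hf; extensionality x; apply pred_ext; intros W; unfold scomp.
  split; intros [hW h]; split; try exact hW;
    destruct (proj1 (atPX_open HY W) hW) as [U [hU ->]];
    assert (hUo : is_open (PX Y) U) by (apply (px_open Y HY), hU);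
    rewrite (Gmor_preimage_eta _ (px_spatial Y) U hUo), (Pmor_open HY Hf U hU) in *;
    rewrite (unit_map_preimage HY U hU) in *.
  - exact (proj1 (unit_map_eta HX _ x (proj2 Hf U hU)) h).
  - exact (proj2 (unit_map_eta HX _ x (proj2 Hf U hU)) h).
Qed.

Definition atoms_sup (M : RawMT) (A : atoms M -> Prop) : car M :=
  sup M (fun x => exists h : atom M x, A (exist _ x h)).
(* [eta] alone satisfies (P4) only where [a = pid M a]; precomposing with the
   identity morphism [pid] repairs this. *)
Definition counit_map (M : RawMT) (a : car M) : car (PX (atM M)) := eta M (pid M a).
Definition counit_inv (M : RawMT) (A : car (PX (atM M))) : car M := pid M (atoms_sup M A).

Section Counit.
Context {M : RawMT} (HM : is_MT M) (Hs : spatial M).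
Let C : is_CBA M := proj1 HM.
Let T : is_topology (atM M) := atM_topology HM.

Lemma eta_atoms_sup A : eta M (atoms_sup M A) = A.
Proof.
  apply pred_ext; intros [y hy]; unfold eta, atoms_sup; simpl; split.
  - intros h; destruct (atom_le_sup C y _ hy h) as [x [[hx hA] hyx]].
    pose proof (atom_le_atom y x hy hx hyx); subst x.
    replace hy with hx by apply proof_irrelevance; exact hA.
  - intros h; apply (le_sup C); exists hy; exact h.
Qed.

Lemma atoms_sup_eta a : atoms_sup M (eta M a) = a.
Proof. apply Hs; rewrite eta_atoms_sup; reflexivity. Qed.

Lemma atPX_open_eta A : is_open (PX (atM M)) A <-> exists u, is_open M u /\ A = eta M u.
Proof. rewrite (px_open _ T); reflexivity. Qed.

Lemma lc_iff_eta x : lc M x <-> lc (PX (atM M)) (eta M x).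
Proof.
  rewrite (px_lc _ T), (lc_iff HM Hs); split.
  - intros [u [v [hu [hv ->]]]]; exists (eta M u), (eta M v).
    split; [exists u; auto | split; [exists v; auto |]].
    rewrite (eta_meet C), (eta_cmpl C); reflexivity.
  - intros [U [V [[u [hu ->]] [[v [hv ->]] e]]]].
    exists u, v; split; [exact hu | split; [exact hv |]].
    apply Hs; rewrite e, (eta_meet C), (eta_cmpl C); reflexivity.
Qed.

Lemma eta_pid a : eta M (pid M a) = pid (PX (atM M)) (eta M a).
Proof.
  apply pred_ext; intros [y hy]; unfold eta at 1; simpl.
  rewrite (atom_le_pid HM) by exact hy; split.
  - intros [x [hx [hxa hyx]]]; exists (eta M x); split; [split |].
    + apply lc_iff_eta, hx.
    + apply (le_iff_eta C Hs), hxa.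
    + exact hyx.
  - intros [L [[hL hLa] hLy]]; exists (atoms_sup M L); rewrite <- (eta_atoms_sup L) in hL, hLa, hLy.
    split; [apply lc_iff_eta, hL | split; [apply (le_iff_eta C Hs), hLa | exact hLy]].
Qed.

Lemma eta_counit_inv A : eta M (counit_inv M A) = pid (PX (atM M)) A.
Proof. unfold counit_inv; rewrite eta_pid, eta_atoms_sup; reflexivity. Qed.

Lemma counit_inv_eta a : counit_inv M (eta M a) = pid M a.
Proof. unfold counit_inv; rewrite atoms_sup_eta; reflexivity. Qed.

Lemma counit_map_lc x : lc M x -> counit_map M x = eta M x.
Proof. intros hx; unfold counit_map; rewrite (pid_lc HM x hx); reflexivity. Qed.

Lemma counit_map_open u : is_open M u -> counit_map M u = eta M u.
Proof. intros hu; apply counit_map_lc, (open_lc HM Hs), hu. Qed.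

Lemma counit_inv_open u : is_open M u -> counit_inv M (eta M u) = u.
Proof. intros hu; rewrite counit_inv_eta; apply (pid_lc HM), (open_lc HM Hs), hu. Qed.

Lemma counit_map_proximity : proximity M (PX (atM M)) (counit_map M).
Proof.
  split; [| split; [| split; [| split; [| split; [| split]]]]].
  - intros u hu; rewrite counit_map_open by exact hu; apply atPX_open_eta; eauto.
  - rewrite counit_map_open, (eta_top C), px_top by apply (open_top HM); reflexivity.
  - intros u v hu hv.
    rewrite !counit_map_open, px_meet, (eta_meet C) by (try apply (open_meet HM); assumption).
    reflexivity.
  - intros S hS; rewrite counit_map_open, (eta_sup C) by (apply (open_sup HM), hS); simpl.
    apply pred_ext; intros y; split.
    + intros [s [hs h]]; exists (counit_map M s).
      split; [exists s; auto | rewrite counit_map_open; auto].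
    + intros [B [[u [hu ->]] h]]; rewrite counit_map_open in h by auto; eauto.
  - intros a b; unfold counit_map; rewrite (pid_meet HM Hs), (eta_meet C), px_meet; reflexivity.
  - intros l hl; unfold counit_map at 1; rewrite (pid_sup_lc HM Hs), (eta_sup C) by exact hl; simpl.
    apply pred_ext; intros y; split.
    + intros [s [hs h]]; exists (counit_map M s).
      split; [exists s; auto | rewrite counit_map_lc; auto].
    + intros [B [[u [hu ->]] h]]; rewrite counit_map_lc in h by auto; eauto.
  - intros a; unfold counit_map at 1; simpl; apply pred_ext; intros [y hy]; unfold eta at 1; simpl.
    rewrite (atom_le_pid HM) by exact hy; split.
    + intros [x [hx [hxa hyx]]]; exists (counit_map M x).
      split; [exists x; auto | rewrite counit_map_lc; auto].
    + intros [B [[x [hx [hxa ->]]] h]]; rewrite counit_map_lc in h by exact hx; exists x; auto.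
Qed.

Lemma counit_inv_proximity : proximity (PX (atM M)) M (counit_inv M).
Proof.
  split; [| split; [| split; [| split; [| split; [| split]]]]].
  - intros A hA; apply atPX_open_eta in hA; destruct hA as [u [hu ->]].
    rewrite counit_inv_open; exact hu.
  - replace (top (PX (atM M))) with (eta M (top M)) by (rewrite px_top, (eta_top C); reflexivity).
    apply counit_inv_open, (open_top HM).
  - intros A B hA hB; apply atPX_open_eta in hA; apply atPX_open_eta in hB.
    destruct hA as [u [hu ->]]; destruct hB as [v [hv ->]].
    rewrite px_meet, <- (eta_meet C), !counit_inv_open by (try apply (open_meet HM); assumption).
    reflexivity.
  - intros S hS.
    assert (hS' : forall U, S U -> isOpen (atM M) U) by (intros U hU; apply (px_open _ T), hS, hU).
    replace (sup (PX (atM M)) S) with (eta M (sup M (fun w => is_open M w /\ S (eta M w))))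
      by (symmetry; apply (union_eta HM S hS')).
    rewrite counit_inv_open by (apply (open_sup HM); intros w [hw _]; exact hw).
    f_equal; apply pred_ext; intros w; split.
    + intros [hw hSw]; exists (eta M w); split; [exact hSw | rewrite counit_inv_open; auto].
    + intros [U [hU ->]]; destruct (hS' U hU) as [u [hu ->]]; rewrite counit_inv_open; auto.
  - intros A B; apply Hs.
    rewrite (eta_meet C), !eta_counit_inv, (pid_meet (px_MT _ T) (px_spatial _)), px_meet.
    reflexivity.
  - intros l hl; apply Hs.
    rewrite eta_counit_inv, (pid_sup_lc (px_MT _ T) (px_spatial _)), (eta_sup C) by exact hl; simpl.
    apply pred_ext; intros y; split.
    + intros [A [hA h]]; exists (counit_inv M A); split; [exists A; auto |].
      rewrite eta_counit_inv, (pid_lc (px_MT _ T)); auto.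
    + intros [s [[A [hA ->]] h]]; rewrite eta_counit_inv, (pid_lc (px_MT _ T)) in h; eauto.
  - intros A; apply Hs; rewrite eta_counit_inv, (eta_sup C); unfold pid at 1; simpl.
    apply pred_ext; intros y; split.
    + intros [L [[hL hLA] h]]; exists (counit_inv M L); split; [exists L; auto |].
      rewrite eta_counit_inv, (pid_lc (px_MT _ T)); auto.
    + intros [s [[L [hL [hLA ->]]] h]]; rewrite eta_counit_inv, (pid_lc (px_MT _ T)) in h; eauto.
Qed.

Lemma counit_inv_map : pcomp M (PX (atM M)) M (counit_inv M) (counit_map M) = pid M.
Proof.
  extensionality a; unfold pcomp, pid; f_equal; apply pred_ext; intros y; split.
  - intros [x [hx [hxa ->]]]; rewrite counit_map_lc, counit_inv_eta, (pid_lc HM) by exact hx; auto.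
  - intros [hy hya]; exists y; split; [exact hy | split; [exact hya |]].
    rewrite counit_map_lc, counit_inv_eta, (pid_lc HM) by exact hy; reflexivity.
Qed.

Lemma counit_map_inv :
  pcomp (PX (atM M)) M (PX (atM M)) (counit_map M) (counit_inv M) = pid (PX (atM M)).
Proof.
  assert (k : forall L, lc (PX (atM M)) L -> counit_map M (counit_inv M L) = L).
  { intros L hL.
    assert (hi : lc M (atoms_sup M L)) by (apply lc_iff_eta; rewrite eta_atoms_sup; exact hL).
    unfold counit_inv; rewrite (pid_lc HM _ hi), counit_map_lc, eta_atoms_sup by exact hi.
    reflexivity. }
  extensionality A; unfold pcomp, pid; f_equal; apply pred_ext; intros B; split.
  - intros [L [hL [hLA ->]]]; rewrite k by exact hL; auto.
  - intros [hB hBA]; exists B; split; [exact hB | split; [exact hBA | symmetry; apply k, hB]].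
Qed.

End Counit.

Lemma counit_natural {M N : RawMT} (g : car M -> car N) :
  is_MT M -> spatial M -> is_MT N -> spatial N -> proximity M N g ->
  pcomp M (PX (atM M)) (PX (atM N)) (Pmor (atM N) (atM M) (Gmor M N g)) (counit_map M)
  = pcomp M N (PX (atM N)) (counit_map N) g.
Proof.
  intros HM HsM HN HsN Hg; pose proof (proj1 HN) as CN.
  assert (k : forall x, lc M x ->
    Pmor (atM N) (atM M) (Gmor M N g) (counit_map M x) = counit_map N (g x)).
  { intros x hx; rewrite (counit_map_lc HM x hx).
    apply (lc_iff HM HsM) in hx; destruct hx as [u [v [hu [hv ->]]]].
    rewrite (prox_diff_open Hg HM HsM CN HsN u v hu hv), (counit_map_lc HN).
    2: { apply (lc_iff HN HsN); exists (g u), (g v).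
         split; [apply (prox_open Hg), hu | split; [apply (prox_open Hg), hv | reflexivity]]. }
    rewrite (eta_meet (proj1 HM)), (eta_cmpl (proj1 HM)), (eta_meet CN), (eta_cmpl CN).
    rewrite (Pmor_diff (atM_topology HM) (Gmor_sober g HM HsM CN Hg)) by (eexists; eauto).
    apply pred_ext; intros y; rewrite !(Gmor_eta g HsM) by assumption; reflexivity. }
  extensionality a; unfold pcomp; f_equal; apply pred_ext; intros B; split;
    intros [x [hx [hxa ->]]]; exists x; (split; [exact hx | split; [exact hxa |]]);
    [| symmetry]; apply k, hx.
Qed.

Theorem theorem6p16 :
  (* the functor P : Top_S -> SMT_P^op on objects is well defined *)
  (forall X : RawSpace, is_topology X -> is_MT (PX X) /\ spatial (PX X)) /\
  (* the functor at : SMT_P^op -> Top_S on objects is well defined *)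
  (forall M : RawMT, is_MT M -> spatial M -> is_topology (atM M)) /\
  (* at on morphisms is well defined and functorial *)
  (forall M N (g : car M -> car N), is_MT M -> spatial M -> is_MT N -> spatial N ->
     proximity M N g -> sober_map (atM N) (atM M) (Gmor M N g)) /\
  (forall M, is_MT M -> spatial M -> Gmor M M (pid M) = sid (atM M)) /\
  (forall M1 M2 M3 (f : car M1 -> car M2) (g : car M2 -> car M3),
     is_MT M1 -> spatial M1 -> is_MT M2 -> spatial M2 -> is_MT M3 -> spatial M3 ->
     proximity M1 M2 f -> proximity M2 M3 g ->
     Gmor M1 M3 (pcomp M1 M2 M3 g f)
     = scomp (atM M3) (atM M2) (atM M1) (Gmor M1 M2 f) (Gmor M2 M3 g)) /\
  (* P on morphisms: f |-> the proximity morphism determined on opens by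
     U |-> {x | U in f x}; it is functorial, and together with at forms an
     equivalence (natural isomorphisms Id ~ at o P and P o at ~ Id) *)
  exists Fmor : forall X Y : RawSpace, smap X Y -> car (PX Y) -> car (PX X),
    (forall X Y (f : smap X Y), is_topology X -> is_topology Y -> sober_map X Y f ->
       proximity (PX Y) (PX X) (Fmor X Y f) /\
       (forall U, isOpen Y U -> Fmor X Y f U = (fun x => f x U))) /\
    (forall X, is_topology X -> Fmor X X (sid X) = pid (PX X)) /\
    (forall X Y Z (f : smap X Y) (g : smap Y Z),
       is_topology X -> is_topology Y -> is_topology Z ->
       sober_map X Y f -> sober_map Y Z g ->
       Fmor X Z (scomp X Y Z g f)
       = pcomp (PX Z) (PX Y) (PX X) (Fmor X Y f) (Fmor Y Z g)) /\
    (* unit: natural isomorphism X ~ at (P X) in Top_S *)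
    (exists (alpha : forall X, smap X (atM (PX X)))
            (alpha' : forall X, smap (atM (PX X)) X),
       (forall X, is_topology X ->
          sober_map X (atM (PX X)) (alpha X) /\
          sober_map (atM (PX X)) X (alpha' X) /\
          scomp X (atM (PX X)) X (alpha' X) (alpha X) = sid X /\
          scomp (atM (PX X)) X (atM (PX X)) (alpha X) (alpha' X) = sid (atM (PX X))) /\
       (forall X Y (f : smap X Y), is_topology X -> is_topology Y -> sober_map X Y f ->
          scomp X (atM (PX X)) (atM (PX Y))
            (Gmor (PX Y) (PX X) (Fmor X Y f)) (alpha X)
          = scomp X Y (atM (PX Y)) (alpha Y) f)) /\
    (* counit: natural isomorphism M ~ P (at M) in SMT_P *)
    (exists (theta : forall M, car M -> car (PX (atM M)))
            (theta' : forall M, car (PX (atM M)) -> car M),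
       (forall M, is_MT M -> spatial M ->
          proximity M (PX (atM M)) (theta M) /\
          proximity (PX (atM M)) M (theta' M) /\
          pcomp M (PX (atM M)) M (theta' M) (theta M) = pid M /\
          pcomp (PX (atM M)) M (PX (atM M)) (theta M) (theta' M) = pid (PX (atM M))) /\
       (forall M N (g : car M -> car N), is_MT M -> spatial M -> is_MT N -> spatial N ->
          proximity M N g ->
          pcomp M (PX (atM M)) (PX (atM N))
            (Fmor (atM N) (atM M) (Gmor M N g)) (theta M)
          = pcomp M N (PX (atM N)) (theta N) g)).
Proof.
  split; [intros X HX; exact (conj (px_MT X HX) (px_spatial X)) |].
  split; [intros M HM _; exact (atM_topology HM) |].
  split; [intros M N g HM HsM HN _ Hg; exact (Gmor_sober g HM HsM (proj1 HN) Hg) |].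
  split; [exact Gmor_pid |].
  split.
  { intros M1 M2 M3 f g H1 Hs1 H2 Hs2 H3 _.
    exact (Gmor_pcomp f g H1 Hs1 (proj1 H2) Hs2 (proj1 H3)). }
  exists Pmor; split; [| split; [| split; [| split]]].
  - intros X Y f HX HY Hf; split; [exact (Pmor_proximity HY Hf HX) | exact (Pmor_open HY Hf)].
  - exact Pmor_sid.
  - intros X Y Z f g _ HY HZ; exact (Pmor_scomp f g HY HZ).
  - exists unit_map, unit_inv; split.
    + intros X HX; split; [exact (unit_map_sober HX) | split; [exact (unit_inv_sober HX) |]].
      split; [exact (unit_inv_map HX) | exact (unit_map_inv HX)].
    + intros X Y f; exact (unit_natural f).
  - exists counit_map, counit_inv; split.
    + intros M HM Hs; split; [exact (counit_map_proximity HM Hs) |].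
      split; [exact (counit_inv_proximity HM Hs) |].
      split; [exact (counit_inv_map HM Hs) | exact (counit_map_inv HM Hs)].
    + intros M N g; exact (counit_natural g).
Qed.
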